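(* Let $\nu,\nu'$ be slack vectors and let $\Gamma\in\mathbb L_2^\nu$. Assume $\|\nu'\|_\infty\le\frac1{2d}$. (1) If for every edge $ij\in\mathcal E$ we have $\Gamma_i+\nu'_{ij}\in\Sigma_d$ and $\Gamma_j+\nu'_{ji}\in\Sigma_d$, then there exists $\Gamma'\in\mathbb L_2^{\nu'}$ with $\|\Gamma-\Gamma'\|_1\le2\|\nu-\nu'\|_1$. (2) If $\nu=0$, then there exists $\Gamma'\in\mathbb L_2^{\nu'}$ with $\|\Gamma-\Gamma'\|_1\le6d\deg(G)\|\nu'\|_1$.
   Context: Let $G=(\mathcal V,\mathcal E)$ be a graph with $\mathcal V=\{1,\dots,n\}$, edges ordered pairs $ij$, maximum degree $\deg(G)$, and $d\ge1$; $\Sigma_d$ is the probability simplex in $\mathbb R^d$ and $\mathbb 1$ the all-ones vector. A marginal vector $\Gamma$ consists of $\Gamma_i\in\mathbb R^d$ ($i\in\mathcal V$) and $\Gamma_{ij}\in\mathbb R^{d\times d}$ ($ij\in\mathcal E$); $\|\cdot\|_1$ is the sum of absolute values of all entries and $\|\cdot\|_\infty$ the maximum absolute entry. A slack vector $\nu$ consists of vectors $\nu_{ij},\nu_{ji}\in\mathbb R^d$ for each $ij\in\mathcal E$ with $\nu_{ij}^\top\mathbb 1=\nu_{ji}^\top\mathbb 1=0$. The slack polytope is $\mathbb L_2^\nu=\{\Gamma\ge0:\Gamma_i\in\Sigma_d\ \forall i;\ \Gamma_{ij}\mathbb 1=\Gamma_i+\nu_{ij},\ \Gamma_{ij}^\top\mathbb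 1=\Gamma_j+\nu_{ji},\ \mathbb 1^\top\Gamma_{ij}\mathbb 1=1\ \forall ij\in\mathcal E\}$; $\mathbb L_2=\mathbb L_2^0$. *)

From HB Require Import structures.
From mathcomp Require Import all_boot all_order all_algebra.
Set Implicit Arguments. Unset Strict Implicit. Unset Printing Implicit Defensive.
Import Order.TTheory GRing.Theory Num.Theory.
Local Open Scope ring_scope.

(* Vertices are 'I_n, labels are 'I_d.  A graph is given by its edge set
   E : {set 'I_n * 'I_n} of ordered pairs ij (one orientation per edge).
   A marginal vector Gamma is a pair (Gv, Ge):
     Gv i : 'I_d -> R            (Gamma_i),
     Ge i j : 'I_d -> 'I_d -> R  (Gamma_ij, only relevant for ij in E).
   A slack vector nu : 'I_n -> 'I_n -> 'I_d -> R gives nu_ij = nu i j and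
   nu_ji = nu j i for ij in E (values off the edges are irrelevant). *)

Section Defs.
Variables (R : realFieldType) (n d : nat).

Definition in_simplex (x : 'I_d -> R) : Prop :=
  (forall a, 0 <= x a) /\ \sum_a x a = 1.

Definition slack_vector (E : {set 'I_n * 'I_n}) (nu : 'I_n -> 'I_n -> 'I_d -> R) : Prop :=
  forall p, p \in E -> \sum_a nu p.1 p.2 a = 0 /\ \sum_a nu p.2 p.1 a = 0.

Definition in_L2nu (E : {set 'I_n * 'I_n}) (nu : 'I_n -> 'I_n -> 'I_d -> R)
  (Gv : 'I_n -> 'I_d -> R) (Ge : 'I_n -> 'I_n -> 'I_d -> 'I_d -> R) : Prop :=
  (forall i, in_simplex (Gv i)) /\
  (forall p, p \in E ->
     [/\ (forall a b, 0 <= Ge p.1 p.2 a b),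
         (forall a, \sum_b Ge p.1 p.2 a b = Gv p.1 a + nu p.1 p.2 a),
         (forall b, \sum_a Ge p.1 p.2 a b = Gv p.2 b + nu p.2 p.1 b) &
         \sum_a \sum_b Ge p.1 p.2 a b = 1]).

Definition marg_dist1 (E : {set 'I_n * 'I_n})
  (Gv Gv' : 'I_n -> 'I_d -> R) (Ge Ge' : 'I_n -> 'I_n -> 'I_d -> 'I_d -> R) : R :=
  \sum_i \sum_a `|Gv i a - Gv' i a|
  + \sum_(p in E) \sum_a \sum_b `|Ge p.1 p.2 a b - Ge' p.1 p.2 a b|.

Definition slack_norm1 (E : {set 'I_n * 'I_n}) (nu : 'I_n -> 'I_n -> 'I_d -> R) : R :=
  \sum_(p in E) \sum_a (`|nu p.1 p.2 a| + `|nu p.2 p.1 a|).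

Definition slack_norminf (E : {set 'I_n * 'I_n}) (nu : 'I_n -> 'I_n -> 'I_d -> R) : R :=
  \big[Num.max/0]_(p in E) \big[Num.max/0]_a Num.max `|nu p.1 p.2 a| `|nu p.2 p.1 a|.

Definition slack_sub (nu nu' : 'I_n -> 'I_n -> 'I_d -> R) : 'I_n -> 'I_n -> 'I_d -> R :=
  fun i j a => nu i j a - nu' i j a.

End Defs.

Definition max_deg (n : nat) (E : {set 'I_n * 'I_n}) : nat :=
  \max_(i : 'I_n) #|[set p in E | (p.1 == i) || (p.2 == i)]|.

From HB Require Import structures.
From mathcomp Require Import all_boot all_order all_algebra.
From mathcomp Require Import ring lra.
Import Order.TTheory GRing.Theory Num.Theory.
Local Open Scope ring_scope.

(* Both parts rest on one coupling construction: a nonnegative matrix P can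
   be moved to a matrix Q with prescribed nonnegative row sums r and column
   sums c of the same total mass, at l1 cost at most
   ||rowsums P - r||_1 + ||colsums P - c||_1.  Shrink row a by
   min(1, r_a / rowsum_a) and column b by min(1, c_b / colsum_b); the mass m
   removed leaves row and column deficits u, v >= 0 of total m each, and
   Q := shrunk P + u v^T / m.  Thus ||P - Q||_1 <= 2m, and 2m is at most the
   marginal error.
   For (1), recouple every edge marginal onto the new node marginals
   Gamma_i + nu'_ij.  For (2), first mix Gamma_i with the uniform
   distribution with weight d mu_i, mu_i the largest entry of nu' on an edge
   at i, so that Gamma_i + nu'_ij >= 0; this costs 2 d mu_i per node, and
   sum_i mu_i <= ||nu'||_1 because each entry of a zero-sum vector is at most
   half of its l1 norm.  Each node is charged by at most deg(G) edges. *)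

Section ScaleDown.
Context {R : realFieldType}.
Implicit Types x y : R.

Definition scale_down x y : R := if y < x then y / x else 1.

Lemma scale_down_ge0 x y : 0 <= x -> 0 <= y -> 0 <= scale_down x y.
Proof. by move=> x_ge0 y_ge0; rewrite /scale_down; case: ifP => // _; exact: divr_ge0. Qed.

Lemma scale_down_le1 x y : 0 <= y -> scale_down x y <= 1.
Proof.
move=> y_ge0; rewrite /scale_down; case: ltP => // yx.
by rewrite ler_pdivrMr ?mul1r ?ltW // (le_lt_trans y_ge0).
Qed.

Lemma mulr_scale_down_le x y : 0 <= y -> x * scale_down x y <= y.
Proof.
move=> y_ge0; rewrite /scale_down; case: ltP => [yx|]; last by rewrite mulr1.
by rewrite mulrC divfK // gt_eqF // (le_lt_trans y_ge0).
Qed.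

Lemma scale_down_defect x y :
  0 <= y -> 2 * (x * (1 - scale_down x y)) = `|x - y| + (x - y).
Proof.
move=> y_ge0; rewrite /scale_down; case: ltP => [yx|xy].
  have x_gt0 : 0 < x by exact: le_lt_trans yx.
  rewrite mulrBr mulr1 mulrCA divff ?gt_eqF ?mulr1 // ger0_norm ?subr_ge0 ?ltW //; lra.
by rewrite subrr mulr0 ler0_norm ?subr_le0 //; lra.
Qed.

Lemma sum_scale_down_defect {I : finType} (x y : I -> R) :
    (forall i, 0 <= y i) -> \sum_i x i = \sum_i y i ->
  2 * \sum_i x i * (1 - scale_down (x i) (y i)) = \sum_i `|x i - y i|.
Proof.
move=> y_ge0 sum_xy; rewrite mulr_sumr.
rewrite (eq_bigr _ (fun i _ => scale_down_defect (x i) (y i) (y_ge0 i))).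
by rewrite big_split /= sumrB sum_xy subrr addr0.
Qed.

End ScaleDown.

Lemma psum_mulr_divff {R : numFieldType} {I : finType} (F : I -> R) i :
  (forall j, 0 <= F j) -> F i * ((\sum_j F j) / \sum_j F j) = F i.
Proof.
move=> F_ge0; have [sum0|sum_neq0] := eqVneq (\sum_j F j) 0; last by rewrite divff ?mulr1.
by rewrite (psumr_eq0P (fun j _ => F_ge0 j) sum0) ?mul0r.
Qed.

Section Coupling.
Context {R : realFieldType} {I J : finType}.
Variables (P : I -> J -> R) (r : I -> R) (c : J -> R).

Definition trim a b : R :=
  P a b * scale_down (\sum_b' P a b') (r a) * scale_down (\sum_a' P a' b) (c b).
Definition row_deficit a : R := r a - \sum_b trim a b.
Definition col_deficit b : R := c b - \sum_a trim a b.

(* If the total deficit is 0 then so are all row and column deficits, so the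
   junk value [x / 0 = 0] is harmless. *)
Definition coupling a b : R :=
  trim a b + row_deficit a * col_deficit b / \sum_a' row_deficit a'.

Hypotheses (P_ge0 : forall a b, 0 <= P a b)
  (r_ge0 : forall a, 0 <= r a) (c_ge0 : forall b, 0 <= c b)
  (sum_r : \sum_a r a = \sum_a \sum_b P a b)
  (sum_c : \sum_b c b = \sum_a \sum_b P a b).

Let alpha a := scale_down (\sum_b P a b) (r a).
Let beta b := scale_down (\sum_a P a b) (c b).

Let alpha_ge0 a : 0 <= alpha a.
Proof. by rewrite scale_down_ge0 ?sumr_ge0. Qed.
Let alpha_le1 a : alpha a <= 1.
Proof. exact: scale_down_le1. Qed.
Let beta_ge0 b : 0 <= beta b.
Proof. by rewrite scale_down_ge0 ?sumr_ge0. Qed.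
Let beta_le1 b : beta b <= 1.
Proof. exact: scale_down_le1. Qed.

Let trimE a b : trim a b = P a b * alpha a * beta b.
Proof. by []. Qed.

Lemma trim_ge0 a b : 0 <= trim a b.
Proof. by rewrite trimE !mulr_ge0. Qed.

Lemma trim_le a b : trim a b <= P a b.
Proof. by rewrite trimE -mulrA ler_piMr ?mulr_ge0 ?mulr_ile1. Qed.

Lemma sum_trim_row_le a : \sum_b trim a b <= r a.
Proof.
apply: le_trans _ (mulr_scale_down_le (\sum_b P a b) _ (r_ge0 a)).
rewrite -/(alpha a) mulr_suml.
by apply: ler_sum => b _; rewrite trimE ler_piMr ?mulr_ge0.
Qed.

Lemma sum_trim_col_le b : \sum_a trim a b <= c b.
Proof.
apply: le_trans _ (mulr_scale_down_le (\sum_a P a b) _ (c_ge0 b)).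
rewrite -/(beta b) mulr_suml.
by apply: ler_sum => a _; rewrite trimE ler_wpM2r // ler_piMr.
Qed.

Lemma row_deficit_ge0 a : 0 <= row_deficit a.
Proof. by rewrite subr_ge0 sum_trim_row_le. Qed.

Lemma col_deficit_ge0 b : 0 <= col_deficit b.
Proof. by rewrite subr_ge0 sum_trim_col_le. Qed.

Lemma sum_row_deficit : \sum_a row_deficit a = \sum_a \sum_b (P a b - trim a b).
Proof. by rewrite sumrB sum_r -sumrB; apply: eq_bigr => a _; rewrite sumrB. Qed.

Lemma sum_col_deficit : \sum_b col_deficit b = \sum_a row_deficit a.
Proof.
rewrite sum_row_deficit sumrB sum_c [X in _ - X]exchange_big -sumrB.
by apply: eq_bigr => a _; rewrite sumrB.
Qed.

Lemma coupling_ge0 a b : 0 <= coupling a b.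
Proof.
rewrite addr_ge0 ?trim_ge0 // !mulr_ge0 ?invr_ge0 ?row_deficit_ge0 ?col_deficit_ge0 //.
by rewrite sumr_ge0 // => a' _; exact: row_deficit_ge0.
Qed.

Lemma sum_coupling_row a : \sum_b coupling a b = r a.
Proof.
rewrite big_split /= -mulr_suml -mulr_sumr sum_col_deficit.
rewrite -mulrA psum_mulr_divff; last exact: row_deficit_ge0.
by rewrite /row_deficit addrC subrK.
Qed.

Lemma sum_coupling_col b : \sum_a coupling a b = c b.
Proof.
rewrite big_split /= -[X in _ + X]mulr_suml -[X in _ + X * _]mulr_suml.
rewrite -sum_col_deficit mulrAC mulrC.
rewrite psum_mulr_divff; last exact: col_deficit_ge0.
by rewrite /col_deficit addrC subrK.
Qed.

Lemma sum_row_deficit_le : \sum_a row_deficit a <=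
  \sum_a (\sum_b P a b) * (1 - alpha a) + \sum_b (\sum_a P a b) * (1 - beta b).
Proof.
have pointwise a b :
    P a b - trim a b <= P a b * (1 - alpha a) + P a b * (1 - beta b).
  have : 0 <= P a b * (1 - alpha a) * (1 - beta b) by rewrite !mulr_ge0 ?subr_ge0.
  rewrite trimE; lra.
rewrite sum_row_deficit.
apply: le_trans (ler_sum _ (fun a _ => ler_sum _ (fun b _ => pointwise a b))) _.
under eq_bigr do rewrite big_split /=.
rewrite big_split /= [X in _ + X]exchange_big /=.
by apply: lerD; apply: ler_sum => ? _; rewrite mulr_suml.
Qed.

Lemma coupling_dist : \sum_a \sum_b `|P a b - coupling a b| <=
  \sum_a `|\sum_b P a b - r a| + \sum_b `|\sum_a P a b - c b|.
Proof.
set D := \sum_a row_deficit a.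
have dist_le : \sum_a \sum_b `|P a b - coupling a b| <=
    \sum_a \sum_b (P a b - trim a b) + \sum_a \sum_b row_deficit a * col_deficit b / D.
  rewrite -big_split; apply: ler_sum => a _; rewrite -big_split; apply: ler_sum => b _.
  rewrite /coupling opprD addrA; apply: le_trans (ler_normD _ _) _.
  rewrite normrN !ger0_norm ?subr_ge0 ?trim_le //.
  rewrite !mulr_ge0 ?invr_ge0 ?row_deficit_ge0 ?col_deficit_ge0 ?sumr_ge0 // => *.
  exact: row_deficit_ge0.
have cross : \sum_a \sum_b row_deficit a * col_deficit b / D = D * (D / D).
  under eq_bigr do rewrite -mulr_suml -mulr_sumr sum_col_deficit -/D.
  by rewrite -mulr_suml -mulr_suml mulrA.
have DD : D * (D / D) = D by have [->|/divff->] := eqVneq D 0; rewrite ?mul0r ?mulr1.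
have row_err := sum_scale_down_defect (fun a => \sum_b P a b) r r_ge0 (esym sum_r).
have col_mass : \sum_b \sum_a P a b = \sum_b c b by rewrite exchange_big sum_c.
have col_err := sum_scale_down_defect (fun b => \sum_a P a b) c c_ge0 col_mass.
rewrite -sum_row_deficit -/D cross DD in dist_le.
have := sum_row_deficit_le; rewrite -/D /alpha /beta; lra.
Qed.

End Coupling.

Lemma zero_sum_normr_le {R : realDomainType} {I : finType} (x : I -> R) i :
  \sum_j x j = 0 -> 2 * `|x i| <= \sum_j `|x j|.
Proof.
rewrite [\sum_j `|x j|](bigD1 i) // [\sum_j x j](bigD1 i) //= => /(canRL (addKr _)).
rewrite addr0 => others.
have := ler_norm_sum (index_enum I) x (fun j => j != i); rewrite others normrN; lra.
Qed.

Section Mixing.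
Context {R : realFieldType} {d : nat}.
Variables (t : R) (x : 'I_d -> R).
Hypotheses (x_simplex : in_simplex x) (t_ge0 : 0 <= t) (dt_le1 : d%:R * t <= 1).

Definition mix_uniform a : R := (1 - d%:R * t) * x a + t.

Lemma mix_uniform_ge a : t <= mix_uniform a.
Proof. by rewrite lerDr mulr_ge0 ?subr_ge0 //; exact: x_simplex.1. Qed.

Lemma mix_uniform_simplex : in_simplex mix_uniform.
Proof.
split=> [a|]; first exact: le_trans t_ge0 (mix_uniform_ge a).
rewrite big_split /= -mulr_sumr x_simplex.2 sumr_const card_ord -mulr_natl; lra.
Qed.

Lemma mix_uniform_dist : \sum_a `|x a - mix_uniform a| <= 2 * d%:R * t.
Proof.
have dt_ge0 : 0 <= d%:R * t by rewrite mulr_ge0.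
apply: le_trans (_ : \sum_a (d%:R * t * x a + t) <= _).
  apply: ler_sum => a _; have x_ge0 := x_simplex.1 a.
  have dtx_ge0 : 0 <= d%:R * t * x a by rewrite mulr_ge0.
  rewrite /mix_uniform ler_norml; apply/andP; split; move: t_ge0 dtx_ge0; lra.
rewrite big_split /= -mulr_sumr x_simplex.2 sumr_const card_ord -mulr_natl.
move: dt_ge0; lra.
Qed.

End Mixing.

Section Recoupling.
Context {R : realFieldType} {n d : nat}.
Implicit Types (E : {set 'I_n * 'I_n}) (nu : 'I_n -> 'I_n -> 'I_d -> R)
  (Gv : 'I_n -> 'I_d -> R) (Ge : 'I_n -> 'I_n -> 'I_d -> 'I_d -> R).

Definition shift_in_simplex E nu Gv := forall p, p \in E ->
  in_simplex (fun a => Gv p.1 a + nu p.1 p.2 a) /\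
  in_simplex (fun a => Gv p.2 a + nu p.2 p.1 a).

Definition recouple nu Gv Ge i j : 'I_d -> 'I_d -> R :=
  coupling (Ge i j) (fun a => Gv i a + nu i j a) (fun b => Gv j b + nu j i b).

Context {E : {set 'I_n * 'I_n}} {nu nu' : 'I_n -> 'I_n -> 'I_d -> R}
  {Gv Gv' : 'I_n -> 'I_d -> R} {Ge : 'I_n -> 'I_n -> 'I_d -> 'I_d -> R}.

Lemma recouple_in_L2nu :
    in_L2nu E nu Gv Ge -> (forall i, in_simplex (Gv' i)) -> shift_in_simplex E nu' Gv' ->
  in_L2nu E nu' Gv' (recouple nu' Gv' Ge).
Proof.
move=> [_ Ge_L2] Gv'_simplex shift; split=> // p pE.
have [Ge_ge0 _ _ Ge_tot] := Ge_L2 p pE; have [[r_ge0 r_sum] [c_ge0 c_sum]] := shift p pE.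
have sum_r := etrans r_sum (esym Ge_tot); have sum_c := etrans c_sum (esym Ge_tot).
split=> [a b|a|b|]; rewrite /recouple.
- exact: coupling_ge0.
- exact: sum_coupling_row.
- exact: sum_coupling_col.
- by under eq_bigr do rewrite sum_coupling_row //.
Qed.

Lemma recouple_dist : in_L2nu E nu Gv Ge -> shift_in_simplex E nu' Gv' ->
  marg_dist1 E Gv Gv' Ge (recouple nu' Gv' Ge) <=
    \sum_i \sum_a `|Gv i a - Gv' i a| +
    \sum_(p in E) \sum_a (`|Gv p.1 a + nu p.1 p.2 a - (Gv' p.1 a + nu' p.1 p.2 a)|
                        + `|Gv p.2 a + nu p.2 p.1 a - (Gv' p.2 a + nu' p.2 p.1 a)|).
Proof.
move=> [_ Ge_L2] shift; rewrite /marg_dist1 lerD2l; apply: ler_sum => p pE.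
have [Ge_ge0 Ge_row Ge_col Ge_tot] := Ge_L2 p pE.
have [[r_ge0 r_sum] [c_ge0 c_sum]] := shift p pE.
have sum_r := etrans r_sum (esym Ge_tot); have sum_c := etrans c_sum (esym Ge_tot).
apply: le_trans (coupling_dist _ _ _ Ge_ge0 r_ge0 c_ge0 sum_r sum_c) _.
rewrite big_split /=; under eq_bigr do rewrite Ge_row.
by under [X in _ + X]eq_bigr do rewrite Ge_col.
Qed.

End Recoupling.

Section Counting.
Context {R : realFieldType} {n : nat}.
Variable E : {set 'I_n * 'I_n}.

Definition incident (i : 'I_n) (p : 'I_n * 'I_n) : bool := (p.1 == i) || (p.2 == i).

Lemma sum_incident_le (g : 'I_n * 'I_n -> R) : (forall p, 0 <= g p) ->
  \sum_i \sum_(p in E | incident i p) g p <= 2 * \sum_(p in E) g p.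
Proof.
move=> g_ge0; apply: le_trans (_ : \sum_i (\sum_(p in E | p.1 == i) g p
    + \sum_(p in E | p.2 == i) g p) <= _).
  apply: ler_sum => i _; rewrite !big_mkcondr -big_split /=.
  apply: ler_sum => p _; rewrite /incident.
  by case: eqP; case: eqP => _ _ /=; rewrite ?addr0 ?add0r ?lerDl.
by rewrite big_split /= -!(partition_big _ xpredT) //=; lra.
Qed.

Lemma sum_incident_indicator (f : 'I_n -> R) p : p.1 != p.2 ->
  \sum_i (if incident i p then f i else 0) = f p.1 + f p.2.
Proof.
move=> no_loop; rewrite (bigD1 p.1) //= /incident (eqxx p.1).
rewrite (bigD1 p.2) /=; last by rewrite eq_sym.
rewrite (eqxx p.2) orbT big1 ?addr0 // => i /andP[i_neq1 i_neq2].
by rewrite eq_sym (negbTE i_neq1) eq_sym (negbTE i_neq2).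
Qed.

Lemma sum_endpoints_le_max_deg (f : 'I_n -> R) :
    (forall p, p \in E -> p.1 != p.2) -> (forall i, 0 <= f i) ->
  \sum_(p in E) (f p.1 + f p.2) <= (max_deg E)%:R * \sum_i f i.
Proof.
move=> no_loop f_ge0.
rewrite -(eq_bigr _ (fun p pE => sum_incident_indicator f _ (no_loop p pE))).
rewrite exchange_big /= mulr_sumr; apply: ler_sum => i _.
rewrite -big_mkcondr sumr_const -[f i *+ _]mulr_natl ler_wpM2r // ler_nat.
by apply: leq_trans _ (leq_bigmax i); rewrite cardsE.
Qed.

Lemma max_deg_gt0 p : p \in E -> (0 < max_deg E)%N.
Proof.
move=> pE; rewrite /max_deg (bigD1 p.1) //= leq_max; apply/orP; left.
by apply/card_gt0P; exists p; rewrite inE pE eqxx.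
Qed.

End Counting.

Section SlackMaxima.
Context {R : realFieldType} {n d : nat}.
Variables (E : {set 'I_n * 'I_n}) (nu : 'I_n -> 'I_n -> 'I_d -> R).

Definition edge_slack p : R := \big[Num.max/0]_a Num.max `|nu p.1 p.2 a| `|nu p.2 p.1 a|.
Definition vertex_slack i : R := \big[Num.max/0]_(p in E | incident i p) edge_slack p.

Lemma edge_slack_ge0 p : 0 <= edge_slack p.
Proof. by rewrite /edge_slack bigmax_idl le_max lexx. Qed.

Lemma vertex_slack_ge0 i : 0 <= vertex_slack i.
Proof. by rewrite /vertex_slack bigmax_idl le_max lexx. Qed.

Lemma normr_le_edge_slack p a :
  `|nu p.1 p.2 a| <= edge_slack p /\ `|nu p.2 p.1 a| <= edge_slack p.
Proof. by split; apply: (bigmax_sup a) => //; rewrite le_max lexx ?orbT. Qed.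

Lemma edge_slack_le_vertex_slack p : p \in E ->
  edge_slack p <= vertex_slack p.1 /\ edge_slack p <= vertex_slack p.2.
Proof. by move=> pE; split; apply: le_bigmax_cond; rewrite pE /incident eqxx ?orbT. Qed.

Lemma vertex_slack_le_norminf i : vertex_slack i <= slack_norminf E nu.
Proof.
apply: bigmax_le => [|p /andP[pE _]]; last exact: le_bigmax_cond.
by rewrite /slack_norminf bigmax_idl le_max lexx.
Qed.

Hypothesis nu_slack : slack_vector E nu.

Lemma edge_slack_le p : p \in E ->
  2 * edge_slack p <= \sum_a (`|nu p.1 p.2 a| + `|nu p.2 p.1 a|).
Proof.
move=> pE; have [sum12 sum21] := nu_slack p pE.
have sum_ge0 : 0 <= \sum_a (`|nu p.1 p.2 a| + `|nu p.2 p.1 a|).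
  by rewrite sumr_ge0 // => a _; rewrite addr_ge0.
rewrite mulrC -ler_pdivlMr ?ltr0n //.
apply: bigmax_le => [|a _]; first by rewrite divr_ge0.
rewrite ge_max big_split /= !ler_pdivlMr ?ltr0n //.
have := zero_sum_normr_le _ a sum12; have := zero_sum_normr_le _ a sum21.
have : 0 <= \sum_a `|nu p.1 p.2 a| by rewrite sumr_ge0.
have : 0 <= \sum_a `|nu p.2 p.1 a| by rewrite sumr_ge0.
move=> *; apply/andP; split; lra.
Qed.

Lemma sum_vertex_slack_le : \sum_i vertex_slack i <= slack_norm1 E nu.
Proof.
apply: le_trans (_ : \sum_i \sum_(p in E | incident i p) edge_slack p <= _).
  apply: ler_sum => i _; apply: bigmax_le => [|p Pp].
    by rewrite sumr_ge0 // => *; exact: edge_slack_ge0.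
  by rewrite (bigD1 p) //= lerDl sumr_ge0 // => *; exact: edge_slack_ge0.
apply: le_trans (sum_incident_le E _ edge_slack_ge0) _.
by rewrite mulr_sumr; apply: ler_sum => p pE; exact: edge_slack_le.
Qed.

End SlackMaxima.

Lemma slack_norm1_ge0 {R : realFieldType} {n d : nat} (E : {set 'I_n * 'I_n})
    (nu : 'I_n -> 'I_n -> 'I_d -> R) :
  0 <= slack_norm1 E nu.
Proof. by rewrite sumr_ge0 // => p _; rewrite sumr_ge0 // => a _; rewrite addr_ge0. Qed.

Lemma in_L2nu_zero_slack {R : realFieldType} {n d : nat} {E : {set 'I_n * 'I_n}}
    {nu : 'I_n -> 'I_n -> 'I_d -> R} {Gv Ge} :
  (forall p, p \in E -> forall a, nu p.1 p.2 a = 0 /\ nu p.2 p.1 a = 0) ->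
  in_L2nu E nu Gv Ge -> in_L2nu E (fun _ _ _ => 0) Gv Ge.
Proof.
move=> nu0 [Gv_simplex Ge_L2]; split=> // p pE.
have [Ge_ge0 Ge_row Ge_col Ge_tot] := Ge_L2 p pE.
by split=> // a; [rewrite Ge_row (nu0 p pE a).1 | rewrite Ge_col (nu0 p pE a).2].
Qed.

Lemma L2nu_near_same_vertices {R : realFieldType} {n d : nat} {E : {set 'I_n * 'I_n}}
    {nu nu' : 'I_n -> 'I_n -> 'I_d -> R} {Gv Ge} :
  in_L2nu E nu Gv Ge -> shift_in_simplex E nu' Gv ->
  exists Gv' Ge', in_L2nu E nu' Gv' Ge' /\
    marg_dist1 E Gv Gv' Ge Ge' <= slack_norm1 E (slack_sub nu nu').
Proof.
move=> L2nu shift; exists Gv, (recouple nu' Gv Ge); split.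
  exact: recouple_in_L2nu L2nu L2nu.1 shift.
apply: le_trans (recouple_dist L2nu shift) _.
rewrite big1 ?add0r => [|i _]; last by rewrite big1 // => a _; rewrite subrr normr0.
apply: ler_sum => p _; apply: ler_sum => a _.
by rewrite /slack_sub !opprD (addrACA (Gv p.1 a)) (addrACA (Gv p.2 a)) !subrr !add0r.
Qed.

Section NearL2.
Context {R : realFieldType} {n d : nat}.
Context {E : {set 'I_n * 'I_n}} {nu : 'I_n -> 'I_n -> 'I_d -> R}
  {Gv : 'I_n -> 'I_d -> R} {Ge : 'I_n -> 'I_n -> 'I_d -> 'I_d -> R}.
Hypotheses (d_gt0 : (0 < d)%N) (no_loop : forall p, p \in E -> p.1 != p.2)
  (nu_slack : slack_vector E nu) (L2 : in_L2nu E (fun _ _ _ => 0) Gv Ge)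
  (nu_small : slack_norminf E nu <= 1 / (2 * d%:R)).

Let mu := vertex_slack E nu.
Let Gv' i := mix_uniform (mu i) (Gv i).

Let d_mu_le1 i : d%:R * mu i <= 1.
Proof.
have d_pos : 0 < d%:R :> R by rewrite ltr0n.
have half : d%:R * (1 / (2 * d%:R)) = 1 / 2 :> R by field; rewrite gt_eqF.
apply: le_trans (ler_wpM2l (ltW d_pos) (vertex_slack_le_norminf E nu i)) _.
apply: le_trans (ler_wpM2l (ltW d_pos) nu_small) _.
by rewrite half ler_pdivrMr // mul1r ler1n.
Qed.

Let Gv'_simplex i : in_simplex (Gv' i).
Proof. by apply: mix_uniform_simplex => //; [exact: L2.1 | exact: vertex_slack_ge0]. Qed.

Let Gv'_shift : shift_in_simplex E nu Gv'.
Proof.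
move=> p pE; have [sum12 sum21] := nu_slack p pE.
have [mu1 mu2] := edge_slack_le_vertex_slack E nu p pE.
have shifted_ge0 i j a : edge_slack nu p <= mu i -> `|nu i j a| <= edge_slack nu p ->
    0 <= Gv' i a + nu i j a.
  move=> le_mu le_edge; have := mix_uniform_ge (mu i) (Gv i) (L2.1 i) (d_mu_le1 i) a.
  have := ler_norm (- nu i j a); rewrite normrN /Gv'; lra.
split; split=> [a|].
- by apply: shifted_ge0 => //; exact: (normr_le_edge_slack nu p a).1.
- by rewrite big_split /= sum12 addr0 (Gv'_simplex _).2.
- by apply: shifted_ge0 => //; exact: (normr_le_edge_slack nu p a).2.
- by rewrite big_split /= sum21 addr0 (Gv'_simplex _).2.
Qed.

Lemma L2nu_near_L2 : exists Gv' Ge', in_L2nu E nu Gv' Ge' /\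
  marg_dist1 E Gv Gv' Ge Ge' <= 6 * d%:R * (max_deg E)%:R * slack_norm1 E nu.
Proof.
exists Gv', (recouple nu Gv' Ge).
split; first exact: recouple_in_L2nu L2 Gv'_simplex Gv'_shift.
apply: le_trans (recouple_dist L2 Gv'_shift) _.
set V := fun i => (\sum_a `|Gv i a - Gv' i a| : R); set N := slack_norm1 E nu.
have V_ge0 i : 0 <= V i by rewrite sumr_ge0.
have edges : \sum_(p in E) \sum_a (`|Gv p.1 a + 0 - (Gv' p.1 a + nu p.1 p.2 a)|
    + `|Gv p.2 a + 0 - (Gv' p.2 a + nu p.2 p.1 a)|) <= \sum_(p in E) (V p.1 + V p.2) + N.
  have tri (x y z : R) : `|x + 0 - (y + z)| <= `|x - y| + `|z|.
    by rewrite addr0 opprD addrA; apply: le_trans (ler_normD _ _) _; rewrite normrN.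
  rewrite /N /slack_norm1 -big_split; apply: ler_sum => p _.
  rewrite /V -!big_split; apply: ler_sum => a _ /=.
  by rewrite addrACA; apply: lerD; exact: tri.
have vertices : \sum_i V i <= 2 * d%:R * N.
  apply: le_trans (_ : \sum_i 2 * d%:R * mu i <= _).
    apply: ler_sum => i _.
    exact: mix_uniform_dist (mu i) (Gv i) (L2.1 i) (vertex_slack_ge0 E nu i).
  by rewrite -mulr_sumr ler_wpM2l ?mulr_ge0 ?ler0n // sum_vertex_slack_le.
have endpoints := sum_endpoints_le_max_deg E V no_loop V_ge0.
have N_ge0 : 0 <= N := slack_norm1_ge0 E nu.
have d_ge1 : 1 <= d%:R :> R by rewrite ler1n.
have [E0|[p pE]] := set_0Vmem E.
  have N0 : N = 0 by rewrite /N /slack_norm1 E0 big_set0.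
  move: edges endpoints; rewrite E0 big_set0 N0 in vertices *; nra.
have deg_ge1 : 1 <= (max_deg E)%:R :> R by rewrite ler1n (max_deg_gt0 E p pE).
have := ler_wpM2l (ler0n _ (max_deg E)) vertices.
have := ler_wpM2l (ler0n _ d) (ler_peMl N_ge0 deg_ge1).
have := ler_peMl N_ge0 (mulr_ege1 d_ge1 deg_ge1).
move: edges endpoints vertices; lra.
Qed.

End NearL2.

Theorem lemma7 (R : realFieldType) (n d : nat) (E : {set 'I_n * 'I_n})
  (nu nu' : 'I_n -> 'I_n -> 'I_d -> R)
  (Gv : 'I_n -> 'I_d -> R) (Ge : 'I_n -> 'I_n -> 'I_d -> 'I_d -> R) :
  (0 < d)%N ->
  (forall p, p \in E -> p.1 != p.2) ->
  (forall p, p \in E -> (p.2, p.1) \notin E) ->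
  slack_vector E nu -> slack_vector E nu' ->
  in_L2nu E nu Gv Ge ->
  slack_norminf E nu' <= 1 / (2 * d%:R) ->
  ((forall p, p \in E ->
      in_simplex (fun a => Gv p.1 a + nu' p.1 p.2 a) /\
      in_simplex (fun a => Gv p.2 a + nu' p.2 p.1 a)) ->
   exists Gv' Ge', in_L2nu E nu' Gv' Ge' /\
     marg_dist1 E Gv Gv' Ge Ge' <= 2 * slack_norm1 E (slack_sub nu nu'))
  /\
  ((forall p, p \in E -> forall a, nu p.1 p.2 a = 0 /\ nu p.2 p.1 a = 0) ->
   exists Gv' Ge', in_L2nu E nu' Gv' Ge' /\
     marg_dist1 E Gv Gv' Ge Ge' <= 6 * d%:R * (max_deg E)%:R * slack_norm1 E nu').
Proof.
move=> d_gt0 no_loop _ _ nu'_slack L2nu nu'_small; split=> [shift | nu0].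
- have [Gv' [Ge' [L2nu' dist]]] := L2nu_near_same_vertices L2nu shift.
  exists Gv', Ge'; split=> //; apply: le_trans dist _.
  by rewrite ler_peMl ?ler1n ?slack_norm1_ge0.
- exact: L2nu_near_L2 d_gt0 no_loop nu'_slack (in_L2nu_zero_slack nu0 L2nu) nu'_small.
Qed.
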